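(* Let $G$ be a $d$-regular bicirculant nut graph of order $n$. Then (i) $n$ and $d$ are both even, and at least one of them is divisible by $4$; and (ii) $d \ge 4$ and $n \ge d+4$.
   Context: A bicirculant graph is a graph that has an automorphism whose cycle decomposition on the vertex set consists of exactly two orbits of equal size. A nut graph is a graph with at least two vertices whose adjacency matrix has eigenvalue $0$ with multiplicity exactly one, such that the corresponding eigenvector has no zero entries. *)

From HB Require Import structures.
From mathcomp Require Import all_boot all_order all_algebra all_fingroup all_field.
Set Implicit Arguments. Unset Strict Implicit. Unset Printing Implicit Defensive.
Import Order.TTheory GRing.Theory Num.Theory.
Local Open Scope ring_scope.

Definition simple_graph (T : finType) (e : rel T) : Prop :=
  symmetric e /\ irreflexive e.

Definition regular (T : finType) (e : rel T) (d : nat) : Prop :=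
  forall x : T, #|[set y | e x y]| = d.

Definition is_automorphism (T : finType) (e : rel T) (s : {perm T}) : Prop :=
  forall x y : T, e (s x) (s y) = e x y.

Definition bicirculant (T : finType) (e : rel T) : Prop :=
  exists s : {perm T}, is_automorphism e s /\
    #|porbits s| = 2%N /\
    (forall A B, A \in porbits s -> B \in porbits s -> #|A| = #|B|).

Definition adj_mx (T : finType) (e : rel T) : 'M[algC]_#|T| :=
  \matrix_(i, j) (e (enum_val i) (enum_val j))%:R.

Definition nut_graph (T : finType) (e : rel T) : Prop :=
  (2 <= #|T|)%N /\
  mup 0 (char_poly (adj_mx e)) = 1%N /\
  (forall v : 'cV[algC]_#|T|, adj_mx e *m v = 0 -> v != 0 ->
     forall i, v i 0 != 0).

From HB Require Import structures.
From mathcomp Require Import all_boot all_order all_algebra all_fingroup all_field.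
From mathcomp Require Import zify ring.

(* Let s be the bicirculant automorphism, with orbits U and W of size m, and
   x a kernel vector of the adjacency matrix.  As the kernel is a line, x is
   real and x \o s = lambda x with lambda^m = 1, so lambda = +-1; normalising
   x(u0) = 1, x takes values +-1 on U and +-b on W.  Let P, bQ (resp. Q', bP')
   be the sums of x over the neighbours of u0 (resp. w0) in U and in W: the
   kernel equations give P = -bQ and Q' = -bP', and double counting the U-W
   edges weighted by x gives Q = Q'.  Hence P P' = Q^2, and Q <> 0 since
   otherwise x restricted to U would be a kernel vector with zeros.  Reducing
   mod 2 shows that d is even, and P P' = Q^2 <> 0 gives every vertex
   neighbours in both orbits.  When m is odd, lambda = 1 and all signs are +,
   so u0 has as many neighbours in U as in W, and by the handshake lemma
   inside U that number is even: 4 divides d.  Finally d = 2 and d = n - 2 are both excluded because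
   they produce two vertices with the same neighbourhood, and the difference
   of their indicator vectors is a kernel vector with zero entries. *)

Set Implicit Arguments.
Unset Strict Implicit.
Unset Printing Implicit Defensive.
Import Order.TTheory GRing.Theory Num.Theory.
Local Open Scope ring_scope.

Definition nbhd (T : finType) (e : rel T) (v : T) : {set T} := [set t | e v t].

Section AdjacencyKernel.

Variables (T : finType) (e : rel T).

Definition adj_kernel (f : T -> algC) := forall v, \sum_(t in nbhd e v) f t = 0.

Lemma sum_nbhd v (f : T -> algC) : \sum_(t in nbhd e v) f t = \sum_t (e v t)%:R * f t.
Proof.
rewrite big_mkcond; apply: eq_bigr => t _.
by rewrite inE; case: (e v t); rewrite ?mul1r ?mul0r.
Qed.

Lemma adj_kernel_col f :
  adj_kernel f <-> adj_mx e *m (\col_i f (enum_val i)) = 0.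
Proof.
split=> [f_ker | /matrixP f_ker v].
  apply/matrixP => i j; rewrite !mxE (ord1 j) -[RHS](f_ker (enum_val i)) sum_nbhd.
  under eq_bigr => k _ do rewrite !mxE.
  by rewrite -(big_enum_val (fun t => (e (enum_val i) t)%:R * f t)).
have := f_ker (enum_rank v) 0; rewrite !mxE sum_nbhd.
under eq_bigr => k _ do rewrite !mxE enum_rankK.
by rewrite -(big_enum_val (fun t => (e v t)%:R * f t)).
Qed.

Lemma adj_kernel_lin (a b : algC) f g :
  adj_kernel f -> adj_kernel g -> adj_kernel (fun t => a * f t + b * g t).
Proof.
by move=> f_ker g_ker v; rewrite big_split /= -!mulr_sumr f_ker g_ker !mulr0 addr0.
Qed.

Lemma adj_kernel_scale (a : algC) f : adj_kernel f -> adj_kernel (fun t => a * f t).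
Proof. by move=> f_ker v; rewrite -mulr_sumr f_ker mulr0. Qed.

Lemma adj_kernel_conj f : adj_kernel f -> adj_kernel (fun t => (f t)^*).
Proof. by move=> f_ker v; rewrite -rmorph_sum f_ker rmorph0. Qed.

Lemma adj_kernel_aut (s : {perm T}) f :
  is_automorphism e s -> adj_kernel f -> adj_kernel (f \o s).
Proof.
move=> s_aut f_ker v; rewrite -[RHS](f_ker (s v)) [RHS](reindex_inj (@perm_inj _ s)).
by apply: eq_bigl => t; rewrite !inE s_aut.
Qed.

Hypotheses (e_sym : symmetric e) (e_nut : nut_graph e).

Lemma nut_kernel_neq0 f t0 t : adj_kernel f -> f t0 != 0 -> f t != 0.
Proof.
case: e_nut => _ [_ nowhere0] /adj_kernel_col f_ker ft0.
have v_neq0 : (\col_i f (enum_val i) : 'cV_#|T|) != 0.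
  apply/eqP => /matrixP /(_ (enum_rank t0) 0); rewrite !mxE enum_rankK.
  exact/eqP.
by have := nowhere0 _ f_ker v_neq0 (enum_rank t); rewrite mxE enum_rankK.
Qed.

Lemma nut_kernel_proportional f g t0 t :
  adj_kernel f -> adj_kernel g -> f t0 != 0 -> g t * f t0 = g t0 * f t.
Proof.
move=> f_ker g_ker ft0.
have h_ker := adj_kernel_lin (f t0) (- g t0) g_ker f_ker.
have ht : f t0 * g t + - g t0 * f t = 0.
  apply/eqP; apply: contraTT (eqxx (0 : algC)) => ht.
  by have := nut_kernel_neq0 t0 h_ker ht; rewrite mulNr mulrC subrr.
by apply/eqP; rewrite -subr_eq0 -ht; apply/eqP; ring.
Qed.

Lemma nut_kernel_exists t0 : exists2 f, adj_kernel f & f t0 = 1.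
Proof.
case: e_nut => _ [mup1 _].
have : root (char_poly (adj_mx e)) 0.
  by rewrite -dvdp_XsubCl XsubC_dvd ?mup1 // monic_neq0 ?char_poly_monic.
rewrite -eigenvalue_root_char => /eigenvalueP [u]; rewrite scale0r => u_ker u_neq0.
pose f t := u 0 (enum_rank t).
have A_sym : (adj_mx e)^T = adj_mx e by apply/matrixP => i j; rewrite !mxE e_sym.
have col_u : (\col_i f (enum_val i) : 'cV_#|T|) = u^T.
  by apply/matrixP => i j; rewrite !mxE (ord1 j) /f enum_valK.
have f_ker : adj_kernel f.
  by apply/adj_kernel_col; rewrite col_u -A_sym -trmx_mul u_ker trmx0.
have [t1 ft1] : exists t1, f t1 != 0.
  apply/existsP; apply: contraNT u_neq0; rewrite negb_exists => /forallP u0.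
  apply/eqP/matrixP => i j; rewrite (ord1 i) mxE -(enum_valK j).
  exact/eqP/negPn/u0.
have ft0 := nut_kernel_neq0 t0 f_ker ft1.
by exists (fun t => (f t0)^-1 * f t); [exact: adj_kernel_scale | rewrite mulVf].
Qed.

Lemma nut_nbhd_inj : (2 < #|T|)%N -> injective (nbhd e).
Proof.
move=> T_gt2 v v' Nvv'; apply/eqP; apply: contraT => v_neq_v'.
have [t] : exists t, t \notin [set v; v'].
  apply/existsP; rewrite -negb_forall; apply: contraTN T_gt2 => /forallP allin.
  rewrite -leqNgt (leq_trans _ (card_size [:: v; v'])) // -cardsT.
  by apply/subset_leq_card/subsetP => t _; have := allin t; rewrite !inE.
rewrite !inE negb_or => /andP [t_neq_v t_neq_v'].
pose y t := (t == v)%:R - (t == v')%:R : algC.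
have sum_delta (A : {set T}) w : \sum_(t in A) (t == w)%:R = (w \in A)%:R :> algC.
  rewrite big_mkcond (bigD1 w) //= eqxx big1 ?addr0 => [|u /negbTE->]; last first.
    by case: ifP.
  by case: (w \in A).
have y_ker : adj_kernel y.
  move=> z; rewrite sumrB !sum_delta !inE (e_sym z v) (e_sym z v').
  by rewrite -[e v z]in_set -[e v' z]in_set -/(nbhd e v) Nvv' subrr.
have yv : y v != 0.
  by rewrite /y eqxx (negbTE v_neq_v') subr0 oner_eq0.
have := nut_kernel_neq0 t y_ker yv.
by rewrite /y (negbTE t_neq_v) (negbTE t_neq_v') subrr eqxx.
Qed.

End AdjacencyKernel.

Lemma aut_expg (T : finType) (e : rel T) (g : {perm T}) i :
  is_automorphism e g -> is_automorphism e (g ^+ i)%g.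
Proof.
move=> g_aut; elim: i => [|i IHi] v w; first by rewrite expg0 !perm1.
by rewrite expgSr !permM g_aut IHi.
Qed.

Lemma card_nbhd_aut (T : finType) (e : rel T) (g : {perm T}) (A : {set T}) v :
  is_automorphism e g -> (forall t, (g t \in A) = (t \in A)) ->
  #|nbhd e (g v) :&: A| = #|nbhd e v :&: A|.
Proof.
move=> g_aut gA; rewrite -(card_preimset _ (@perm_inj _ g)).
by apply: eq_card => t; rewrite !inE g_aut gA.
Qed.

Lemma regular_degree_lt (T : finType) (e : rel T) d :
  irreflexive e -> regular e d -> (0 < #|T|)%N -> (d < #|T|)%N.
Proof.
move=> e_irr e_reg /card_gt0P [v _]; rewrite -(e_reg v) -[#|T|]cardsT.
by apply/proper_card/properP; split; [exact: subsetT | exists v; rewrite ?inE ?e_irr].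
Qed.

Lemma nut_regular_degree_add2_neq (T : finType) (e : rel T) d :
  simple_graph e -> regular e d -> nut_graph e -> (0 < d)%N -> (d + 2)%N != #|T|.
Proof.
move=> [e_sym e_irr] e_reg e_nut d_gt0; apply/eqP => order_d.
have non_nbhd v a b : a != b -> a \notin nbhd e v -> b \notin nbhd e v ->
    ~: nbhd e v = [set a; b].
  move=> ab av bv; apply/eqP; rewrite eq_sym eqEcard cards2 ab cardsCs setCK e_reg.
  rewrite -order_d addKn andbT; apply/subsetP => t; rewrite !inE.
  by case/orP => /eqP ->; [move: av | move: bv]; rewrite inE.
have [u _] : exists u, u \in T by apply/card_gt0P; rewrite -order_d addn2.
have u_in : u \in ~: nbhd e u by rewrite !inE e_irr.
have [v] : exists v, v \in ~: nbhd e u :\ u.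
  apply/card_gt0P; move: (cardsD1 u (~: nbhd e u)).
  by rewrite u_in cardsCs setCK e_reg -order_d addKn; lia.
rewrite !inE => /andP [vu uv].
have : nbhd e u = nbhd e v.
  apply: setC_inj; rewrite (non_nbhd u v u) // ?inE ?e_irr // (non_nbhd v v u) //.
  - by rewrite inE e_irr.
  - by rewrite inE e_sym.
have T_gt2 : (2 < #|T|)%N by rewrite -order_d; lia.
by move/(nut_nbhd_inj e_sym e_nut T_gt2)/eqP; rewrite eq_sym (negbTE vu).
Qed.

Lemma handshake (T : finType) (e : rel T) (U : {set T}) k :
  simple_graph e -> (forall u, u \in U -> #|nbhd e u :&: U| = k) ->
  ~~ odd (#|U| * k).
Proof.
move=> [e_sym e_irr] degU; pose lt (a b : T) := (enum_rank a < enum_rank b)%N.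
have -> : (#|U| * k = \sum_(a in U) \sum_(b in U) e a b)%N.
  rewrite -sum_nat_const; apply: eq_bigr => a /degU <-.
  rewrite -sum1_card [RHS]big_mkcond [LHS]big_mkcond; apply: eq_bigr => b _.
  by rewrite !inE andbC; case: (b \in U); case: (e a b).
have split_lt a b : (e a b = (e a b && lt a b) + (e a b && lt b a) :> nat)%N.
  rewrite /lt; case: ltngtP => [_|_|/val_inj/enum_rank_inj->];
    by rewrite ?andbT ?andbF ?addn0 ?e_irr.
under eq_bigr => a _ do rewrite (eq_bigr _ (fun b _ => split_lt a b)) big_split.
rewrite big_split /= [X in (_ + X)%N]exchange_big /=.
under [X in (_ + X)%N]eq_bigr => b _ do under eq_bigr => a _ do rewrite e_sym.
by rewrite addnn odd_double.
Qed.

Section TwoOrbits.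

Variables (T : finType) (s : {perm T}).

Lemma porbit_expg_fix t i : ((s ^+ i)%g t == t) = (#|porbit s t| %| i)%N.
Proof.
set m := #|porbit s t|; have m_gt0 : (0 < m)%N by rewrite lt0n card_porbit_neq0.
have iter_m k : iter (k * m) s t = t.
  by elim: k => [|k IHk] //; rewrite mulSn iterD IHk iter_porbit.
rewrite permX {1}(divn_eq i m) addnC iterD iter_m.
have := nth_uniq t _ _ (uniq_traject_porbit s t); rewrite size_traject.
by move=> /(_ (i %% m)%N 0%N); rewrite ltn_mod m_gt0 !nth_traject ?ltn_mod // => ->.
Qed.

Lemma porbit_expg_mem t i v : ((s ^+ i)%g t \in porbit s v) = (t \in porbit s v).
Proof. by rewrite -!eq_porbit_mem porbit_perm. Qed.

Lemma two_porbits u0 :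
  #|porbits s| = 2%N -> exists w0, porbit s w0 = ~: porbit s u0.
Proof.
move=> orbits2; set U := porbit s u0.
have orbit_in t : porbit s t \in porbits s by apply: imset_f.
have [w0 w0_notin | allU] := pickP (fun t => t \notin U); last first.
  suff : (#|porbits s| <= #|[set U]|)%N by rewrite orbits2 cards1.
  apply/subset_leq_card/subsetP => _ /imsetP [t _ ->].
  by rewrite inE eq_porbit_mem; move/negbFE: (allU t).
exists w0; apply/setP => t; rewrite inE -!eq_porbit_mem.
have UW : U != porbit s w0 by rewrite eq_sym eq_porbit_mem.
apply/eqP/idP => [-> | tU]; first by rewrite eq_sym.
apply/eqP; apply: contraTT (introT eqP orbits2) => tW.
have : porbit s t |: [set U; porbit s w0] \subset porbits s.
  by apply/subsetP => X; rewrite !inE => /or3P [] /eqP ->; apply: orbit_in.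
move/subset_leq_card; rewrite cardsU1 cards2 UW !inE negb_or tU tW.
by case: #|_| => [|[|[]]].
Qed.

End TwoOrbits.

Definition sum_of_signs (k : nat) (z : int) :=
  exists2 r : nat, (r <= k)%N & z = k%:Z - 2 * r%:Z.

Lemma sum_of_signs_gt0 k z : sum_of_signs k z -> z != 0 -> (0 < k)%N.
Proof.
by case=> r r_le_k ->; apply: contraNT; rewrite lt0n negbK => /eqP k0; apply/eqP; lia.
Qed.

Lemma sum_sign_card (R : numDomainType) (T : finType) (S : {set T}) (g : T -> R) c :
  (forall t, t \in S -> g t ^+ 2 = c ^+ 2) ->
  exists2 z, sum_of_signs #|S| z & \sum_(t in S) g t = c * z%:~R.
Proof.
move=> g_sqr; set r := #|[set t in S | g t == - c]|.
exists (#|S|%:Z - 2 * r%:Z).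
  by exists r => //; apply/subset_leq_card/subsetP => t; rewrite inE => /andP [].
have sign t : t \in S -> g t = c * (1 - 2 * (g t == - c)%:R).
  move=> /g_sqr /eqP; rewrite eqf_sqr => /orP [] /eqP ->; last first.
    by rewrite eqxx mulr1; ring.
  by case: eqP => [{2}->|_]; rewrite ?mulr1 ?mulr0; ring.
have count : \sum_(t in S) ((g t == - c)%:R : R) = r%:R.
  rewrite /r -sum1_card natr_sum [LHS]big_mkcond [RHS]big_mkcond /=.
  by apply: eq_bigr => t _; rewrite inE; case: (t \in S); case: (g t == - c).
rewrite (eq_bigr _ sign) -mulr_sumr sumrB sumr_const -mulr_sumr count intrB intrM.
by rewrite -[1 *+ _]/(_%:R).
Qed.

Lemma signs_product_even d kU kW kU' kW' (P Q P' : int) :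
  (kU + kW = d)%N -> (kU' + kW' = d)%N ->
  sum_of_signs kU P -> sum_of_signs kW Q -> sum_of_signs kU' Q -> sum_of_signs kW' P' ->
  P * P' = Q * Q -> ~~ odd d.
Proof.
(* Mod 2 the product reads kU kW' = kW = kU', impossible when kU + kW is odd. *)
move=> dU dW [r1 _ ->] [r2 _ Qr2] [r3 _ Qr3] [r4 _ ->] PPQ; apply/negP => d_odd.
have [j dj] : exists j, d = (j * 2 + 1)%N.
  by exists d./2; have := odd_double_half d; rewrite d_odd -muln2 /=; lia.
have [i [ki|ki]] : exists i, kU = (i * 2)%N \/ kU = (i * 2 + 1)%N.
  by exists kU./2; have := odd_double_half kU; case: odd; rewrite -muln2 /=; lia.
all: nia.
Qed.

Lemma even_add4_le m n :
  ~~ odd m -> ~~ odd n -> (m < n)%N -> (m + 2)%N != n -> (m + 4 <= n)%N.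
Proof.
move=> /negbTE m_even /negbTE n_even; have := odd_double_half m.
have := odd_double_half n; rewrite m_even n_even -!muln2 /= !add0n.
by move: (m./2) (n./2) => a b; lia.
Qed.

Lemma dvdn_add_of_odd_halves m a c :
  (m %| a + a)%N -> ~~ (m %| a)%N -> (m %| c + c)%N -> ~~ (m %| c)%N -> (m %| a + c)%N.
Proof.
have odd_half b : (m %| b + b)%N -> ~~ (m %| b)%N -> exists k, (b + b = m * (k * 2 + 1))%N.
  case/dvdnP => k bk m_b; exists k./2; have := odd_double_half k.
  case: (boolP (odd k)) => [_|even_k]; rewrite -muln2 /=; first by lia.
  by case/negP: m_b; apply/dvdnP; exists k./2; nia.
move=> /odd_half Ha {}/Ha [k ak] /odd_half Hc {}/Hc [l cl].
by apply/dvdnP; exists (k + l + 1)%N; lia.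
Qed.

Section BicirculantNut.

Variables (T : finType) (e : rel T) (d : nat) (s : {perm T}) (u0 w0 : T) (m : nat).
Hypotheses (e_sym : symmetric e) (e_irr : irreflexive e) (e_reg : regular e d).
Hypothesis e_nut : nut_graph e.
Hypothesis s_aut : is_automorphism e s.
Hypothesis porbit_w0 : porbit s w0 = ~: porbit s u0.
Hypothesis card_porbit : forall t, #|porbit s t| = m.

Local Notation U := (porbit s u0).
Local Notation W := (porbit s w0).

Lemma card_bicirculant : #|T| = (m * 2)%N.
Proof. by rewrite -(cardsC U) -porbit_w0 !card_porbit muln2 addnn. Qed.

Lemma period_gt0 : (0 < m)%N.
Proof. by rewrite -(card_porbit u0) lt0n card_porbit_neq0. Qed.

Lemma expg_fix t i : ((s ^+ i)%g t == t) = (m %| i)%N.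
Proof. by rewrite porbit_expg_fix card_porbit. Qed.

Lemma porbit_cases t : porbit s t = U \/ porbit s t = W.
Proof.
case: (boolP (t \in U)) => tU; [left | right]; apply/eqP; rewrite eq_porbit_mem //.
by rewrite porbit_w0 inE.
Qed.

Lemma card_nbhd_porbit v t u :
  t \in porbit s v -> #|nbhd e t :&: porbit s u| = #|nbhd e v :&: porbit s u|.
Proof.
case/porbitP => i ->; apply: card_nbhd_aut (aut_expg i s_aut) _ => t'.
exact: porbit_expg_mem.
Qed.

Lemma card_nbhd_split v : (#|nbhd e v :&: U| + #|nbhd e v :&: W|)%N = d.
Proof. by rewrite porbit_w0 -setDE cardsID e_reg. Qed.

Lemma expg_nbr_involutive t a :
  (forall v, #|nbhd e v :&: porbit s t| = 1%N) -> e t ((s ^+ a)%g t) ->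
  (m %| a + a)%N /\ ~~ (m %| a)%N.
Proof.
move=> one_nbr et; set t1 := (s ^+ a)%g t in et *.
have [z Ez] := cards1P (introT eqP (one_nbr t1)).
have in_nbr v : v \in nbhd e t1 :&: porbit s t -> v = z by rewrite Ez inE => /eqP.
have back : (s ^+ a)%g t1 = t.
  rewrite (in_nbr t); last by rewrite !inE e_sym et porbit_id.
  by apply: in_nbr; rewrite !inE /t1 (aut_expg a s_aut) et !porbit_expg_mem porbit_id.
split; first by rewrite -(expg_fix t) expgD permM back.
by rewrite -(expg_fix t) -/t1; apply: contraTN et => /eqP ->; rewrite e_irr.
Qed.

Lemma not_one_nbr_per_orbit : ~ (forall v u, #|nbhd e v :&: porbit s u| = 1%N).
Proof.
(* Uniqueness of the neighbours makes s^a (u1 = s^a u0) and s^c (w' = s^c w)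
   both the involution of <s>; hence s^a w = w', and u0 and w' share the
   neighbourhood {u1, w}. *)
move=> one_nbr.
have nbr_set v u z : z \in nbhd e v :&: porbit s u -> nbhd e v :&: porbit s u = [set z].
  have [z' ->] := cards1P (introT eqP (one_nbr v u)).
  by rewrite inE => /eqP ->.
have [u1 u1_in] : exists u1, u1 \in nbhd e u0 :&: U by apply/card_gt0P; rewrite one_nbr.
have [w w_in] : exists w, w \in nbhd e u0 :&: W by apply/card_gt0P; rewrite one_nbr.
have [w' w'_in] : exists w', w' \in nbhd e w :&: porbit s w.
  by apply/card_gt0P; rewrite one_nbr.
move: (u1_in) (w_in) (w'_in); rewrite !inE => /andP [u0u1 /porbitP [a u1a]].
move=> /andP [u0w wW] /andP [ww' /porbitP [c w'c]].
have [a2 a_ndvd] : (m %| a + a)%N /\ ~~ (m %| a)%N.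
  by apply: expg_nbr_involutive (one_nbr^~ u0) _; rewrite -u1a.
have [c2 c_ndvd] : (m %| c + c)%N /\ ~~ (m %| c)%N.
  by apply: expg_nbr_involutive (one_nbr^~ w) _; rewrite -w'c.
have sc_w' : (s ^+ c)%g w' = w by apply/eqP; rewrite w'c -permM -expgD expg_fix.
have sa_w : (s ^+ a)%g w = w'.
  apply/eqP; rewrite -{1}sc_w' -permM -expgD addnC expg_fix.
  exact: dvdn_add_of_odd_halves.
have nbhd_eq v : u1 \in nbhd e v -> w \in nbhd e v ->
    nbhd e v = [set u1] :|: [set w].
  move=> vu1 vw; rewrite -(setID (nbhd e v) U) setDE -porbit_w0.
  rewrite (nbr_set v u0 u1); last by case/setIP: u1_in => _ u1U; rewrite in_setI vu1.
  by rewrite (nbr_set v w0 w) // in_setI vw.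
have T_gt2 : (2 < #|T|)%N.
  rewrite card_bicirculant; have := period_gt0.
  by case: (m) a_ndvd => [|[|]] //; rewrite dvd1n.
have : nbhd e w' = nbhd e u0.
  rewrite [RHS]nbhd_eq ?inE //; apply: nbhd_eq; rewrite inE; last by rewrite e_sym.
  by rewrite -sa_w u1a (aut_expg a s_aut) e_sym.
move/(nut_nbhd_inj e_sym e_nut T_gt2) => w'u0.
by move: wW; rewrite -(porbit_expg_mem s w c) -w'c w'u0 porbit_w0 inE porbit_id.
Qed.

Section KernelVector.

Variable x : T -> algC.
Hypotheses (x_ker : adj_kernel e x) (x_u0 : x u0 = 1).

Local Notation lambda := (x (s u0)).

Lemma x_neq0 t : x t != 0.
Proof. by apply: (nut_kernel_neq0 (t0 := u0) e_nut t x_ker); rewrite x_u0 oner_eq0. Qed.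

Lemma x_real t : (x t)^* = x t.
Proof.
have := nut_kernel_proportional e_nut t x_ker (adj_kernel_conj x_ker) (x_neq0 u0).
by rewrite x_u0 conjC1 mulr1 mul1r.
Qed.

Lemma x_expg i t : x ((s ^+ i)%g t) = lambda ^+ i * x t.
Proof.
have x_s v : x (s v) = lambda * x v.
  have := nut_kernel_proportional e_nut v x_ker (adj_kernel_aut s_aut x_ker) (x_neq0 u0).
  by rewrite x_u0 mulr1.
elim: i => [|i IHi]; first by rewrite expg0 perm1 mul1r.
by rewrite expgSr permM x_s IHi exprS mulrA.
Qed.

Lemma lambda_period : lambda ^+ m = 1.
Proof.
have /eqP fix_m : (s ^+ m)%g u0 == u0 by rewrite expg_fix.
by have := x_expg m u0; rewrite fix_m x_u0 mulr1.
Qed.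

Lemma lambda_sqr : lambda ^+ 2 = 1.
Proof.
have norm1 : `|lambda| = 1.
  apply/eqP; rewrite -(pexpr_eq1 period_gt0) ?normr_ge0 //.
  by rewrite -normrX lambda_period normr1.
by rewrite expr2 -{2}(x_real (s u0)) -normCK norm1 expr1n.
Qed.

Lemma x_sqr_porbit t v : t \in porbit s v -> x t ^+ 2 = x v ^+ 2.
Proof. by case/porbitP => i ->; rewrite x_expg exprMn exprAC lambda_sqr expr1n mul1r. Qed.

Definition nsum v (A : {set T}) := \sum_(t in nbhd e v :&: A) x t.

Lemma nsum_opp v : nsum v U = - nsum v W.
Proof. by apply/eqP; rewrite -subr_eq0 opprK /nsum porbit_w0 -setDE -big_setID x_ker. Qed.

Lemma nsum_expg v u i :
  nsum ((s ^+ i)%g v) (porbit s u) = lambda ^+ i * nsum v (porbit s u).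
Proof.
rewrite /nsum mulr_sumr (reindex_inj (@perm_inj _ (s ^+ i)%g)) /=.
apply: eq_big => [t | t _]; last by rewrite x_expg.
by rewrite !in_setI !inE (aut_expg i s_aut) porbit_expg_mem.
Qed.

Lemma nsum_porbit t v u :
  t \in porbit s v -> nsum t (porbit s u) * x v = nsum v (porbit s u) * x t.
Proof. by case/porbitP => i ->; rewrite nsum_expg x_expg mulrCA mulrA. Qed.

Lemma cross_sum : \sum_(t in U) x t * nsum t W = \sum_(t in W) x t * nsum t U.
Proof.
have expand (A B : {set T}) : \sum_(t in A) x t * nsum t B =
    \sum_(t in A) \sum_(z in B) (e t z)%:R * (x t * x z).
  apply: eq_bigr => t _; rewrite /nsum mulr_sumr [LHS]big_mkcond [RHS]big_mkcond.
  apply: eq_bigr => z _; rewrite !inE.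
  by case: (e t z); case: (z \in B); rewrite ?mul1r ?mul0r.
rewrite !expand [RHS]exchange_big; apply: eq_bigr => t _; apply: eq_bigr => z _.
by rewrite e_sym [x z * _]mulrC.
Qed.

Lemma nsum_u0_W : nsum u0 W = x w0 * nsum w0 U.
Proof.
have nsum_in t v u : t \in porbit s v ->
    x t * nsum t (porbit s u) * x v = nsum v (porbit s u) * x v ^+ 2.
  by move=> tv; rewrite -mulrA nsum_porbit // mulrCA -expr2 (x_sqr_porbit tv).
have sum_U : \sum_(t in U) x t * nsum t W = nsum u0 W *+ m.
  rewrite -(card_porbit u0) -sumr_const; apply: eq_bigr => t tU.
  by have := nsum_in t u0 w0 tU; rewrite x_u0 expr1n !mulr1.
have sum_W : (\sum_(t in W) x t * nsum t U) * x w0 = (nsum w0 U * x w0 ^+ 2) *+ m.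
  rewrite -(card_porbit w0) -sumr_const mulr_suml; apply: eq_bigr => t tW.
  exact: nsum_in.
have m_neq0 : (m%:R : algC) != 0 by rewrite pnatr_eq0 -lt0n period_gt0.
apply: (mulIf (x_neq0 w0)); apply: (mulIf m_neq0).
transitivity ((nsum u0 W *+ m) * x w0); first by rewrite mulr_natr mulrnAl.
by rewrite -sum_U cross_sum sum_W -mulr_natr; ring.
Qed.

Lemma nsum_w0_U_neq0 : nsum w0 U != 0.
Proof.
apply/eqP => nsum0.
have nsum_U0 v : nsum v U = 0.
  have [vU | vW] := boolP (v \in U).
    have := nsum_porbit u0 vU; rewrite x_u0 mulr1 => ->.
    by rewrite nsum_opp nsum_u0_W nsum0 mulr0 oppr0 mul0r.
  have {}vW : v \in W by rewrite porbit_w0 inE.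
  apply/eqP; rewrite -(mulIr_eq0 _ (mulIf (x_neq0 w0))).
  by rewrite (nsum_porbit u0 vW) nsum0 mul0r.
pose y t := (t \in U)%:R * x t.
have y_ker : adj_kernel e y.
  move=> v; rewrite -[RHS](nsum_U0 v) /nsum [LHS]big_mkcond [RHS]big_mkcond.
  apply: eq_bigr => t _; rewrite !inE /y.
  by case: (e v t); case: (t \in U); rewrite ?mul1r ?mul0r.
have yu0 : y u0 != 0 by rewrite /y porbit_id mul1r x_neq0.
have := nut_kernel_neq0 e_nut w0 y_ker yu0.
have w0U : w0 \notin U by rewrite -in_setC -porbit_w0 porbit_id.
by rewrite /y (negbTE w0U) mul0r eqxx.
Qed.

Lemma nsum_relation : nsum u0 U * nsum w0 W = x w0 * nsum w0 U ^+ 2.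
Proof.
have -> : nsum w0 W = - nsum w0 U by rewrite nsum_opp opprK.
by rewrite nsum_opp nsum_u0_W; ring.
Qed.

Lemma nsum_signs : exists P Q P' : int,
  [/\ sum_of_signs #|nbhd e u0 :&: U| P, sum_of_signs #|nbhd e u0 :&: W| Q,
      sum_of_signs #|nbhd e w0 :&: U| Q, sum_of_signs #|nbhd e w0 :&: W| P'
      & P * P' = Q * Q /\ Q != 0].
Proof.
have sqr_in v u t : t \in nbhd e v :&: porbit s u -> x t ^+ 2 = x u ^+ 2.
  by case/setIP => _; apply: x_sqr_porbit.
have [P sP EP] := sum_sign_card (sqr_in u0 u0).
have [Q sQ EQ] := sum_sign_card (sqr_in u0 w0).
have [Q' sQ' EQ'] := sum_sign_card (sqr_in w0 u0).
have [P' sP' EP'] := sum_sign_card (sqr_in w0 w0).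
rewrite -/(nsum u0 U) x_u0 mul1r in EP; rewrite -/(nsum w0 U) x_u0 mul1r in EQ'.
rewrite -/(nsum u0 W) in EQ; rewrite -/(nsum w0 W) in EP'.
have QQ' : Q = Q'.
  apply/eqP; rewrite -(eqr_int algC) -(inj_eq (mulfI (x_neq0 w0))).
  by rewrite -EQ -EQ' nsum_u0_W.
subst Q'; exists P, Q, P'; split=> //; split.
  apply/eqP; rewrite -(eqr_int algC) -(inj_eq (mulfI (x_neq0 w0))) !intrM.
  by rewrite mulrCA -EP' -EP nsum_relation EQ'; apply/eqP; ring.
by rewrite -(eqr_int algC) -EQ' nsum_w0_U_neq0.
Qed.

Lemma balanced_of_odd_period :
  odd m -> #|nbhd e u0 :&: U| = #|nbhd e u0 :&: W|.
Proof.
move=> m_odd.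
have lambda1 : lambda = 1.
  have := lambda_period; rewrite -(odd_double_half m) m_odd -muln2 mulnC.
  by rewrite exprD exprM lambda_sqr expr1n mulr1.
have nsum_const v u : nsum v (porbit s u) = x u *+ #|nbhd e v :&: porbit s u|.
  rewrite -sumr_const; apply: eq_bigr => t /setIP [_ /porbitP [i ->]].
  by rewrite x_expg lambda1 expr1n mul1r.
have := nsum_u0_W; rewrite !nsum_const x_u0 mulr_natr => /(mulrIn (x_neq0 w0)) WU.
have := nsum_relation; rewrite !nsum_const x_u0 mulr_natl -mulrnA -natrX mulr_natr.
move/(mulrIn (x_neq0 w0)) => UW; have := card_nbhd_split u0; have := card_nbhd_split w0.
nia.
Qed.

Lemma degree_even : ~~ odd d.
Proof.
have [P [Q [P' [sP sQ sQ' sP' [PQ _]]]]] := nsum_signs.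
exact: signs_product_even (card_nbhd_split u0) (card_nbhd_split w0) sP sQ sQ' sP' PQ.
Qed.

Lemma four_dvd_order_or_degree : (4 %| #|T|)%N || (4 %| d)%N.
Proof.
rewrite card_bicirculant; have [m_odd | m_even] := boolP (odd m); last first.
  apply/orP; left; apply/dvdnP; exists m./2.
  by have := odd_double_half m; rewrite (negbTE m_even) -muln2; lia.
apply/orP; right.
have := handshake (conj e_sym e_irr) (fun u (uU : u \in U) => card_nbhd_porbit u0 uU).
rewrite card_porbit oddM m_odd /= => even_k.
rewrite -(card_nbhd_split u0) -balanced_of_odd_period //; apply/dvdnP.
exists #|nbhd e u0 :&: U|./2.
by have := odd_double_half #|nbhd e u0 :&: U|; rewrite (negbTE even_k) -muln2; lia.
Qed.

Lemma degree_ge4 : (4 <= d)%N.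
Proof.
have [P [Q [P' [sP sQ sQ' sP' [PQ Q0]]]]] := nsum_signs.
have [P0 P'0] : P != 0 /\ P' != 0.
  by apply/andP; rewrite -negb_or -mulf_eq0 PQ mulf_neq0.
have kU := sum_of_signs_gt0 sP P0; have kW := sum_of_signs_gt0 sQ Q0.
have kU' := sum_of_signs_gt0 sQ' Q0; have kW' := sum_of_signs_gt0 sP' P'0.
have dU := card_nbhd_split u0; have dW := card_nbhd_split w0.
rewrite leqNgt; apply/negP => d_lt4.
have d2 : d = 2%N by have := odd_double_half d; rewrite (negbTE degree_even) -muln2; lia.
apply: not_one_nbr_per_orbit => v u.
have [/card_nbhd_porbit -> | /card_nbhd_porbit ->] : v \in U \/ v \in W.
  by rewrite porbit_w0 inE; case: (v \in U); [left | right].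
all: by case: (porbit_cases u) => ->; lia.
Qed.

End KernelVector.

Lemma bicirculant_nut_degree : [/\ ~~ odd d, (4 %| #|T|)%N || (4 %| d)%N & (4 <= d)%N].
Proof.
have [x x_ker x_u0] := nut_kernel_exists e_sym e_nut u0.
split; [exact: degree_even x_ker x_u0 | exact: four_dvd_order_or_degree x_ker x_u0 |].
exact: degree_ge4 x_ker x_u0.
Qed.

End BicirculantNut.

Local Close Scope ring_scope.

Theorem mainTheorem18 (T : finType) (e : rel T) (d : nat) :
  simple_graph e -> regular e d -> bicirculant e -> nut_graph e ->
  let n := #|T| in
  [/\ ~~ odd n, ~~ odd d & (4 %| n) || (4 %| d)] /\ (4 <= d /\ d + 4 <= n).
Proof.
move=> [e_sym e_irr] e_reg [s [s_aut [orbits2 same_size]]] e_nut; rewrite /=.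
have T_gt0 : 0 < #|T| by case: e_nut => /ltnW.
have [u0 _] : exists u0, u0 \in T by apply/card_gt0P.
have [w0 porbit_w0] := two_porbits u0 orbits2.
have card_porbit t : #|porbit s t| = #|porbit s u0| by apply: same_size; apply: imset_f.
have [d_even four_dvd d_ge4] :=
  bicirculant_nut_degree e_sym e_irr e_reg e_nut s_aut porbit_w0 card_porbit.
have n_even : ~~ odd #|T| by rewrite (card_bicirculant porbit_w0 card_porbit) muln2 odd_double.
have d_lt_n := regular_degree_lt e_irr e_reg T_gt0.
have := nut_regular_degree_add2_neq (conj e_sym e_irr) e_reg e_nut (leq_trans (isT : 0 < 4) d_ge4).
split; first by split.
by split=> //; apply: even_add4_le.
Qed.
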